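(* Let $L$ be a finite lattice, $a\in L$, and $\varphi\in M_1(L)$. Then $\Lambda_a\varphi\in M_1(L)$, where $\Lambda_a\varphi(x)=\varphi(x)-\lambda(\varphi;a,x)$ for $x\in L$.
   Context: $L$ is a finite lattice with join $\vee$. $M_1(L)$ is the set of nonnegative monotone real functions on $L$. A path from $a$ to $b$ in $L$ is a sequence $H=(h_0,\dots,h_m)$ of distinct elements of $L$ with $h_0=a$, $h_m=b$ ($m\ge0$), viewed as a tree with edges $\{h_{i-1},h_i\}$; for it $\varphi(H)=\sum_{i=0}^m\varphi(h_i)-\sum_{i=1}^m\varphi(h_{i-1}\vee h_i)$. $\lambda(\varphi;a,b)=\max\{\varphi(H): H\text{ a path from }a\text{ to }b\}$. *)

From mathcomp Require Import all_boot all_order all_algebra.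
From mathcomp Require Import reals.
Set Implicit Arguments. Unset Strict Implicit. Unset Printing Implicit Defensive.
Import Order.TTheory GRing.Theory Num.Theory.
Local Open Scope ring_scope.

Section Defs.
Context {d : Order.disp_t} {L : finLatticeType d} {R : realType}.

Definition M1 (phi : L -> R) : Prop :=
  (forall x, 0 <= phi x) /\ (forall x y : L, (x <= y)%O -> phi x <= phi y).

(* A path h_0, ..., h_m is represented by its head h_0 and tail [h_1;...;h_m]. *)
Definition is_path_from_to (a b : L) (s : seq L) : bool :=
  uniq (a :: s) && (last a s == b).

Definition path_value (phi : L -> R) (a : L) (s : seq L) : R :=
  \sum_(h <- a :: s) phi h - \sum_(p <- zip (a :: s) s) phi (Order.join p.1 p.2).

Fixpoint allseqs (n : nat) : seq (seq L) :=
  if n is n'.+1 then [::] :: [seq x :: s | x <- enum L, s <- allseqs n']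
  else [:: [::]].

(* A canonical path from a to b: (a) if a = b, else (a, b). Used only as the
   initial value of the max; it is itself a path from a to b. *)
Definition canon_path (a b : L) : seq L := if a == b then [::] else [:: b].

(* lambda(phi; a, b) = max { phi(H) : H a path from a to b }.
   Tails of paths are duplicate-free, hence have length < #|L|. *)
Definition lambda (phi : L -> R) (a b : L) : R :=
  \big[Num.max/path_value phi a (canon_path a b)]_(s <- allseqs #|L| | is_path_from_to a b s)
     path_value phi a s.

Definition Lambda (a : L) (phi : L -> R) : L -> R := fun x => phi x - lambda phi a x.

End Defs.

From mathcomp Require Import all_boot all_order all_algebra.
From mathcomp Require Import reals.
From mathcomp Require Import lra zify.
Set Implicit Arguments. Unset Strict Implicit. Unset Printing Implicit Defensive.
Import Order.TTheory GRing.Theory Num.Theory.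
Local Open Scope ring_scope.

(* The value of a path telescopes: each step from h to h' contributes
   phi h - phi (h \/ h') <= 0, so for monotone phi a path from a to x is worth
   at most phi x, which gives Lambda_a phi >= 0.  For monotonicity take x <= y
   and a path H from a to y.  If H passes through x, cut it there: the piece
   from x to y is worth at most phi y, so phi(H) <= lambda(a, x) + phi y - phi x.
   Otherwise append x to H; since y \/ x = y this adds exactly phi x - phi y,
   and the same bound follows.  Hence lambda(a, y) - lambda(a, x) <= phi y - phi x. *)

Section PathValue.
Context {d : Order.disp_t} {L : finLatticeType d} {R : realType}.
Variable phi : L -> R.

Lemma path_value_nil a : path_value phi a [::] = phi a.
Proof. by rewrite /path_value big_seq1 big_nil subr0. Qed.

Lemma path_value_cons a b s :
  path_value phi a (b :: s) = phi a - phi (Order.join a b) + path_value phi b s.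
Proof. by rewrite /path_value /= !big_cons /=; lra. Qed.

Lemma path_value_cat a s1 s2 :
  path_value phi a (s1 ++ s2) =
  path_value phi a s1 + path_value phi (last a s1) s2 - phi (last a s1).
Proof.
elim: s1 a => [|b s IH] a /=; first by rewrite path_value_nil; lra.
by rewrite !path_value_cons IH; lra.
Qed.

Lemma path_value_rcons a s x :
  path_value phi a (rcons s x) =
  path_value phi a s + phi x - phi (Order.join (last a s) x).
Proof. by rewrite -cats1 path_value_cat path_value_cons path_value_nil; lra. Qed.

Hypothesis phi_mono : forall x y : L, (x <= y)%O -> phi x <= phi y.

Lemma path_value_le_last a s : path_value phi a s <= phi (last a s).
Proof.
elim: s a => [|b s IH] a /=; first by rewrite path_value_nil.
by rewrite path_value_cons; have := phi_mono (leUl a b); have := IH b; lra.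
Qed.

End PathValue.

Section Lambda.
Context {d : Order.disp_t} {L : finLatticeType d} {R : realType}.
Implicit Types (phi : L -> R) (a x y : L) (s : seq L).

Lemma mem_allseqs n s : (size s <= n)%N -> s \in allseqs n.
Proof.
elim: n s => [|n IH] [|x s] //= /IH s_in.
by rewrite inE; apply/orP; right; apply: allpairs_f; rewrite ?mem_enum.
Qed.

Lemma is_path_canon_path a x : is_path_from_to a x (canon_path a x).
Proof.
rewrite /canon_path /is_path_from_to; case: eqP => [->|/eqP ax] /=.
  by rewrite eqxx.
by rewrite inE ax eqxx.
Qed.

Lemma le_lambda phi a x s :
  is_path_from_to a x s -> path_value phi a s <= lambda phi a x.
Proof.
move=> path_s; apply: le_bigmax_seq => //; apply: mem_allseqs.
case/andP: path_s => uniq_s _.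
by have := max_card (mem (a :: s)); rewrite (card_uniqP uniq_s) /=; lia.
Qed.

Lemma lambda_le phi a x (B : R) :
  (forall s, is_path_from_to a x s -> path_value phi a s <= B) ->
  lambda phi a x <= B.
Proof.
by move=> ub; apply: bigmax_le => //; apply/ub/is_path_canon_path.
Qed.

Variable phi : L -> R.
Hypothesis phi_mono : forall x y : L, (x <= y)%O -> phi x <= phi y.

Lemma lambda_le_self a x : lambda phi a x <= phi x.
Proof.
apply: lambda_le => s /andP [_ /eqP <-]; exact: path_value_le_last.
Qed.

Lemma lambda_le_shift a x y :
  (x <= y)%O -> lambda phi a y <= lambda phi a x + phi y - phi x.
Proof.
move=> le_xy; apply: lambda_le => s /andP [uniq_s /eqP last_s].
have [x_on_s|x_off_s] := boolP (x \in a :: s).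
  case/splitPl: x_on_s uniq_s last_s => s1 s2 last_s1.
  rewrite -cat_cons cat_uniq => /andP [uniq_s1 _].
  rewrite last_cat path_value_cat last_s1 => last_s2.
  have to_x : path_value phi a s1 <= lambda phi a x.
    by apply: le_lambda; rewrite /is_path_from_to uniq_s1 last_s1 eqxx.
  have := path_value_le_last phi_mono x s2; rewrite last_s2; lra.
have to_x : path_value phi a (rcons s x) <= lambda phi a x.
  apply: le_lambda.
  by rewrite /is_path_from_to last_rcons eqxx -rcons_cons rcons_uniq x_off_s uniq_s.
by move: to_x; rewrite path_value_rcons last_s (join_idPl le_xy); lra.
Qed.

End Lambda.

Theorem lemma3p11 (d : Order.disp_t) (L : finLatticeType d) (R : realType)
    (a : L) (phi : L -> R) :
  M1 phi -> M1 (Lambda a phi).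
Proof.
case=> _ phi_mono; split=> [x|x y le_xy]; rewrite /Lambda.
  by rewrite subr_ge0; apply: lambda_le_self.
by have := lambda_le_shift phi_mono a le_xy; lra.
Qed.
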